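(* Let $d\ge 1$, $T>0$, $\alpha\ge 0$, and let $H:\mathbb{R}\to\mathbb{C}^{d\times d}$ be a continuously differentiable map such that $H(v)$ is Hermitian for every $v\in\mathbb{R}$ (so that $\partial_v H(v)$ is Hermitian as well). Let $u:[0,T]\to\mathbb{R}$ be a continuous control, and let $|\psi_i\rangle,|\psi_f\rangle\in\mathbb{C}^d$. Let $|\psi(t)\rangle$ and $|\chi(t)\rangle$ be the solutions on $[0,T]$ of $$ i\,\partial_t|\psi(t)\rangle = H(u(t))|\psi(t)\rangle,\quad |\psi(0)\rangle=|\psi_i\rangle, \qquad i\,\partial_t|\chi(t)\rangle = H(u(t))|\chi(t)\rangle,\quad |\chi(T)\rangle=|\psi_f\rangle .$$ Define the gradient of the figure of merit $\mathcal{J}[u]=\mathrm{Re}\,\langle\psi(T)|\psi_f\rangle-\frac{\alpha}{2}\int_0^T u(t)^2\,dt$ by $$\nabla\mathcal{J}[u](t) = -\alpha u(t) + \mathrm{Im}\,\langle\chi(t)|\partial_v H(u(t))|\psi(t)\rangle,\qquad t\in[0,T].$$ Let $N\in\mathbb{N}$, $0=t_0<t_1<\dots<t_N=T$, and for $n=0,\dots,N$ define the intermediate states $$|\varphi^u_n\rangle=\frac{T-t_n}{T}|\psi(t_n)\rangle+\frac{t_n}{T}|\chi(t_n)\rangle .$$ For $0\le n\le N-1$ set $\alpha_n=\frac{t_{n+1}-t_n}{T}\alpha$ and $\beta_n=\frac{T}{t_{n+1}-t_n}$, and let $|\psi_n(t)\rangle$, $|\chi_n(t)\rangle$ be the solutions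 on $[t_n,t_{n+1}]$ of $$ i\,\partial_t|\psi_n(t)\rangle = H(u(t))|\psi_n(t)\rangle,\ |\psi_n(t_n)\rangle=|\varphi^u_n\rangle,\qquad i\,\partial_t|\chi_n(t)\rangle = H(u(t))|\chi_n(t)\rangle,\ |\chi_n(t_{n+1})\rangle=|\varphi^u_{n+1}\rangle ,$$ and define the gradient of the sub-functional $\mathcal{J}_n[u_n,|\varphi^u\rangle]=-\frac12\big\||\psi_n(t_{n+1})\rangle-|\varphi^u_{n+1}\rangle\big\|^2-\frac{\alpha_n}{2}\int_{t_n}^{t_{n+1}}u_n(t)^2dt$ (with $u_n=u|_{[t_n,t_{n+1}]}$) by $$\nabla\mathcal{J}_n[u|_{[t_n,t_{n+1}]},|\varphi^u\rangle](t) = -\alpha_n u(t) + \mathrm{Im}\,\langle\chi_n(t)|\partial_v H(u(t))|\psi_n(t)\rangle,\qquad t\in[t_n,t_{n+1}].$$ Then for every $n\in\{0,\dots,N-1\}$ and every $t\in[t_n,t_{n+1}]$, $$\nabla\mathcal{J}[u](t)=\beta_n\,\nabla\mathcal{J}_n[u|_{[t_n,t_{n+1}]},|\varphi^u\rangle](t).$$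
   Context: Bra-ket notation: $\langle a|B|c\rangle$ denotes the Hermitian inner product of $|a\rangle$ with $B|c\rangle$ (antilinear in the first argument); $\|\cdot\|$ is the associated norm. $\partial_v H(v)$ denotes the derivative of $H$ with respect to its scalar argument $v$. All differential equations are linear ODEs in $\mathbb{C}^d$ with continuous coefficients, so their solutions exist and are unique on the stated intervals. *)

(* Complex numbers are
   modelled as pairs (real part, imaginary part); vectors of C^d as
   functions nat -> C (only indices < d matter); d x d matrices as
   nat -> nat -> C. *)
From Stdlib Require Import Reals Lra.
Open Scope R_scope.

Definition C := (R * R)%type.
Definition Cre (z : C) : R := fst z.
Definition Cim (z : C) : R := snd z.
Definition C0 : C := (0, 0).
Definition Cadd (z w : C) : C := (fst z + fst w, snd z + snd w).
Definition Cmul (z w : C) : C :=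
  (fst z * fst w - snd z * snd w, fst z * snd w + snd z * fst w).
Definition Cconj (z : C) : C := (fst z, - snd z).
Definition Rscal (r : R) (z : C) : C := (r * fst z, r * snd z).

Definition vec := nat -> C.
Definition mat := nat -> nat -> C.

Fixpoint Csum (n : nat) (f : nat -> C) : C :=
  match n with
  | O => C0
  | S m => Cadd (Csum m f) (f m)
  end.

Definition mv (d : nat) (A : mat) (x : vec) : vec :=
  fun i => Csum d (fun j => Cmul (A i j) (x j)).

Definition braket (d : nat) (a : vec) (B : mat) (c : vec) : C :=
  Csum d (fun i => Cmul (Cconj (a i)) (mv d B c i)).

Definition hermitian (d : nat) (A : mat) : Prop :=
  forall i j, (i < d)%nat -> (j < d)%nat -> A i j = Cconj (A j i).

Definition cont_on (a b : R) (f : R -> R) : Prop :=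
  forall t, a <= t <= b -> forall eps, 0 < eps ->
    exists delta, 0 < delta /\
      forall s, a <= s <= b -> Rabs (s - t) < delta -> Rabs (f s - f t) < eps.

(* y : [a,b] -> C^d is a solution of  i dy/dt = H(u(t)) y  on [a,b]:
   y is continuous on [a,b], differentiable on (a,b) and satisfies
   dy/dt = -i H(u(t)) y(t) there (componentwise, real and imaginary parts). *)
Definition is_solution (d : nat) (H : R -> mat) (u : R -> R) (a b : R)
    (y : R -> vec) : Prop :=
  (forall k, (k < d)%nat ->
     cont_on a b (fun s => Cre (y s k)) /\ cont_on a b (fun s => Cim (y s k))) /\
  (forall t, a < t < b -> forall k, (k < d)%nat ->
     derivable_pt_lim (fun s => Cre (y s k)) t (Cim (mv d (H (u t)) (y t) k)) /\
     derivable_pt_lim (fun s => Cim (y s k)) t (- Cre (mv d (H (u t)) (y t) k))).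

Definition C1_with_derivative (d : nat) (H dH : R -> mat) : Prop :=
  forall i j, (i < d)%nat -> (j < d)%nat ->
    (forall v, derivable_pt_lim (fun w => Cre (H w i j)) v (Cre (dH v i j)) /\
               derivable_pt_lim (fun w => Cim (H w i j)) v (Cim (dH v i j))) /\
    continuity (fun v => Cre (dH v i j)) /\ continuity (fun v => Cim (dH v i j)).

Definition gradJ (d : nat) (dH : R -> mat) (alpha : R) (u : R -> R)
    (psi chi : R -> vec) (t : R) : R :=
  - alpha * u t + Cim (braket d (chi t) (dH (u t)) (psi t)).

Definition phi_state (T : R) (tt : nat -> R) (psi chi : R -> vec) (n : nat) : vec :=
  fun k => Cadd (Rscal ((T - tt n) / T) (psi (tt n) k))
                (Rscal (tt n / T) (chi (tt n) k)).

(* Both [psin n] and the interpolant t |-> ((T - t_n)/T) psi(t) + (t_n/T) chi(t)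
   solve i y' = H(u(t)) y on [t_n, t_{n+1}] and agree at t_n.  Since H is
   Hermitian the evolution preserves the norm, so the difference of two
   solutions that vanishes at one time vanishes everywhere: [psin n] is that
   interpolant, and likewise [chin n] is the interpolant with weight t_{n+1}.
   Expanding Im <chin n|dH|psin n> bilinearly, the diagonal terms Im <x|A|x>
   vanish and the cross terms are antisymmetric (dH is Hermitian), which leaves
   ((t_{n+1} - t_n)/T) Im <chi|dH|psi>; the factor beta_n cancels it. *)

From Pilot Require Import Defs.
From Stdlib Require Import Reals Lra Lia FunctionalExtensionality.
Open Scope R_scope.

Fixpoint Rsum (n : nat) (f : nat -> R) : R :=
  match n with O => 0 | S m => Rsum m f + f m end.

Lemma Rsum_ext n f g :
  (forall k, (k < n)%nat -> f k = g k) -> Rsum n f = Rsum n g.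
Proof.
  induction n; intros Hfg; simpl; auto.
  rewrite IHn by (intros; apply Hfg; lia). rewrite Hfg by lia. reflexivity.
Qed.

Lemma Rsum_plus n f g : Rsum n (fun k => f k + g k) = Rsum n f + Rsum n g.
Proof. induction n; simpl; [ring|]. rewrite IHn; ring. Qed.

Lemma Rsum_scal n r f : Rsum n (fun k => r * f k) = r * Rsum n f.
Proof. induction n; simpl; [ring|]. rewrite IHn; ring. Qed.

Lemma Rsum_opp n f : Rsum n (fun k => - f k) = - Rsum n f.
Proof. induction n; simpl; [ring|]. rewrite IHn; ring. Qed.

Lemma Rsum_zero n : Rsum n (fun _ => 0) = 0.
Proof. induction n; simpl; [ring|]. rewrite IHn; ring. Qed.

Lemma Rsum_swap n m f :
  Rsum n (fun i => Rsum m (fun j => f i j)) = Rsum m (fun j => Rsum n (fun i => f i j)).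
Proof.
  induction n; simpl.
  - symmetry; apply Rsum_zero.
  - rewrite IHn, <- Rsum_plus; reflexivity.
Qed.

Lemma Rsum_nonneg n f : (forall k, (k < n)%nat -> 0 <= f k) -> 0 <= Rsum n f.
Proof.
  induction n; intros Hf; simpl; [lra|].
  assert (0 <= f n) by (apply Hf; lia).
  assert (0 <= Rsum n f) by (apply IHn; intros; apply Hf; lia).
  lra.
Qed.

Lemma Rsum_nonneg_eq0 n f :
  (forall k, (k < n)%nat -> 0 <= f k) -> Rsum n f = 0 ->
  forall k, (k < n)%nat -> f k = 0.
Proof.
  induction n; intros Hf Hsum k Hk; [lia|]. simpl in Hsum.
  assert (0 <= Rsum n f) by (apply Rsum_nonneg; intros; apply Hf; lia).
  assert (0 <= f n) by (apply Hf; lia).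
  destruct (Nat.eq_dec k n) as [->|Hkn]; [lra|].
  apply IHn; [intros; apply Hf; lia | lra | lia].
Qed.

Lemma C_ext (z w : Defs.C) : Cre z = Cre w -> Cim z = Cim w -> z = w.
Proof. destruct z, w; unfold Cre, Cim; simpl; intros; subst; reflexivity. Qed.

Lemma Csum_ext n f g :
  (forall k, (k < n)%nat -> f k = g k) -> Csum n f = Csum n g.
Proof.
  induction n; intros Hfg; simpl; auto.
  rewrite IHn by (intros; apply Hfg; lia). rewrite Hfg by lia. reflexivity.
Qed.

Lemma Cim_Csum n f : Cim (Csum n f) = Rsum n (fun k => Cim (f k)).
Proof. induction n; simpl; [reflexivity|]. unfold Cim in *; simpl; rewrite IHn; reflexivity. Qed.

Lemma Csum_add n f g :
  Csum n (fun k => Cadd (f k) (g k)) = Cadd (Csum n f) (Csum n g).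
Proof.
  induction n; simpl; [|rewrite IHn]; apply C_ext; unfold Cre, Cim; simpl; ring.
Qed.

Lemma Csum_scal n r f : Csum n (fun k => Rscal r (f k)) = Rscal r (Csum n f).
Proof.
  induction n; simpl; [|rewrite IHn]; apply C_ext; unfold Cre, Cim; simpl; ring.
Qed.

Lemma Cmul_Csum n a f : Cmul a (Csum n f) = Csum n (fun k => Cmul a (f k)).
Proof.
  induction n; simpl; [|rewrite <- IHn]; apply C_ext; unfold Cre, Cim; simpl; ring.
Qed.

Definition lin_comb (r : R) (x : vec) (s : R) (y : vec) : vec :=
  fun k => Cadd (Rscal r (x k)) (Rscal s (y k)).

Lemma mv_lin_comb d A r x s y k :
  mv d A (lin_comb r x s y) k = Cadd (Rscal r (mv d A x k)) (Rscal s (mv d A y k)).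
Proof.
  unfold mv. rewrite <- !Csum_scal, <- Csum_add. apply Csum_ext; intros.
  unfold lin_comb; apply C_ext; unfold Cre, Cim; simpl; ring.
Qed.

Lemma braket_ext d x x' A y y' :
  (forall k, (k < d)%nat -> x k = x' k) -> (forall k, (k < d)%nat -> y k = y' k) ->
  braket d x A y = braket d x' A y'.
Proof.
  intros Hx Hy. unfold braket, mv. apply Csum_ext; intros i Hi.
  rewrite Hx by exact Hi. f_equal.
  apply Csum_ext; intros j Hj. rewrite Hy by exact Hj; reflexivity.
Qed.

Lemma Im_braket_double_sum d x A y :
  Cim (braket d x A y) =
  Rsum d (fun i => Rsum d (fun j => Cim (Cmul (Cconj (x i)) (Cmul (A i j) (y j))))).
Proof.
  unfold braket, mv. rewrite Cim_Csum. apply Rsum_ext; intros.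
  rewrite Cmul_Csum, Cim_Csum. reflexivity.
Qed.

Lemma Im_braket_componentwise d x A y :
  Cim (braket d x A y) =
  Rsum d (fun k => Cre (x k) * Cim (mv d A y k) - Cim (x k) * Cre (mv d A y k)).
Proof.
  unfold braket. rewrite Cim_Csum. apply Rsum_ext; intros.
  unfold Cre, Cim; simpl; ring.
Qed.

Lemma Im_braket_antisym d x A y :
  hermitian d A -> Cim (braket d x A y) = - Cim (braket d y A x).
Proof.
  intros HA. rewrite !Im_braket_double_sum.
  rewrite (Rsum_swap d d (fun i j => Cim (Cmul (Cconj (y i)) (Cmul (A i j) (x j))))).
  rewrite <- Rsum_opp. apply Rsum_ext; intros i Hi.
  rewrite <- Rsum_opp. apply Rsum_ext; intros j Hj.
  rewrite (HA j i) by assumption.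
  destruct (x i), (y j), (A i j); unfold Cim; simpl; ring.
Qed.

Lemma Im_braket_self d x A : hermitian d A -> Cim (braket d x A x) = 0.
Proof. intros HA. pose proof (Im_braket_antisym d x A x HA). lra. Qed.

Lemma Im_braket_lin_comb d c x e y A a p b q :
  Cim (braket d (lin_comb c x e y) A (lin_comb a p b q)) =
  c * a * Cim (braket d x A p) + c * b * Cim (braket d x A q) +
  e * a * Cim (braket d y A p) + e * b * Cim (braket d y A q).
Proof.
  rewrite !Im_braket_double_sum, <- !Rsum_scal, <- !Rsum_plus.
  apply Rsum_ext; intros.
  rewrite <- !Rsum_scal, <- !Rsum_plus. apply Rsum_ext; intros.
  unfold lin_comb. destruct (x k), (y k), (p k0), (q k0), (A k k0); unfold Cim; simpl; ring.
Qed.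

Lemma Im_braket_interpolation d A x y T a b :
  hermitian d A -> T <> 0 ->
  Cim (braket d (lin_comb ((T - b) / T) x (b / T) y) A (lin_comb ((T - a) / T) x (a / T) y))
  = (b - a) / T * Cim (braket d y A x).
Proof.
  intros HA HT.
  rewrite Im_braket_lin_comb, !Im_braket_self, (Im_braket_antisym d x A y) by exact HA.
  field; exact HT.
Qed.

Lemma cont_on_limit1_in a b f :
  cont_on a b f <-> forall t, a <= t <= b -> limit1_in f (fun s => a <= s <= b) (f t) t.
Proof.
  unfold cont_on, limit1_in, limit_in; simpl; unfold R_dist; split;
    intros Hc t Ht eps He; destruct (Hc t Ht eps He) as [delta [Hd Hs]];
    exists delta; split; auto.
  intros x [Hx Hx']; apply Hs; auto.
Qed.

Lemma cont_on_plus a b f g :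
  cont_on a b f -> cont_on a b g -> cont_on a b (fun x => f x + g x).
Proof. rewrite !cont_on_limit1_in; intros; apply limit_plus; auto. Qed.

Lemma cont_on_mult a b f g :
  cont_on a b f -> cont_on a b g -> cont_on a b (fun x => f x * g x).
Proof. rewrite !cont_on_limit1_in; intros; apply limit_mul; auto. Qed.

Lemma cont_on_const a b c : cont_on a b (fun _ => c).
Proof.
  intros t Ht eps He; exists 1; split; [lra|]; intros.
  replace (c - c) with 0 by ring; rewrite Rabs_R0; lra.
Qed.

Lemma cont_on_lin a b r f s g :
  cont_on a b f -> cont_on a b g -> cont_on a b (fun x => r * f x + s * g x).
Proof. intros; apply cont_on_plus; apply cont_on_mult; auto; apply cont_on_const. Qed.

Lemma cont_on_Rsum n F a b :
  (forall k, (k < n)%nat -> cont_on a b (F k)) -> cont_on a b (fun x => Rsum n (fun k => F k x)).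
Proof.
  induction n; intros HF; simpl; [apply cont_on_const|].
  apply cont_on_plus; [apply IHn; intros|]; apply HF; lia.
Qed.

Lemma cont_on_subinterval a b a' b' f :
  a <= a' -> b' <= b -> cont_on a b f -> cont_on a' b' f.
Proof.
  intros Ha Hb Hc t Ht eps He. destruct (Hc t ltac:(lra) eps He) as [delta [Hd Hs]].
  exists delta; split; auto. intros; apply Hs; auto; lra.
Qed.

Lemma derivable_pt_lim_lin f g t l1 l2 r s :
  derivable_pt_lim f t l1 -> derivable_pt_lim g t l2 ->
  derivable_pt_lim (fun x => r * f x + s * g x) t (r * l1 + s * l2).
Proof.
  intros. apply (derivable_pt_lim_plus (mult_real_fct r f) (mult_real_fct s g));
    apply derivable_pt_lim_scal; auto.
Qed.

Lemma derivable_pt_lim_sum_sqr f g t l1 l2 :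
  derivable_pt_lim f t l1 -> derivable_pt_lim g t l2 ->
  derivable_pt_lim (fun x => f x * f x + g x * g x) t (2 * (f t * l1 + g t * l2)).
Proof.
  intros Hf Hg.
  replace (2 * (f t * l1 + g t * l2)) with (l1 * f t + f t * l1 + (l2 * g t + g t * l2)) by ring.
  exact (derivable_pt_lim_plus (f * f)%F (g * g)%F t _ _
           (derivable_pt_lim_mult f f t l1 l1 Hf Hf) (derivable_pt_lim_mult g g t l2 l2 Hg Hg)).
Qed.

Lemma derivable_pt_lim_Rsum n F L t :
  (forall k, (k < n)%nat -> derivable_pt_lim (F k) t (L k)) ->
  derivable_pt_lim (fun x => Rsum n (fun k => F k x)) t (Rsum n L).
Proof.
  induction n; intros HD; simpl; [apply derivable_pt_lim_const|].
  apply (derivable_pt_lim_plus (fun x => Rsum n (fun k => F k x)) (F n));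
    [apply IHn; intros|]; apply HD; lia.
Qed.

Lemma zero_derivative_const_open a b g :
  (forall t, a < t < b -> derivable_pt_lim g t 0) ->
  forall x y, a < x -> x <= y -> y < b -> g x = g y.
Proof.
  intros Hd x y Hx Hxy Hy.
  destruct (Req_dec x y) as [->|Hne]; [reflexivity|].
  assert (pr : forall z, x < z < y -> derivable_pt g z) by (intros z Hz; exists 0; apply Hd; lra).
  assert (Hcont : forall z, x <= z <= y -> continuity_pt g z).
  { intros z Hz. apply derivable_continuous_pt. exists 0. apply Hd; lra. }
  assert (Hzero : forall z (P : x < z < y), derive_pt g z (pr z P) = 0).
  { intros z P. apply derive_pt_eq_0. apply Hd; lra. }
  symmetry. apply (null_derivative_loc g x y pr Hcont Hzero). lra.
Qed.

Lemma cont_on_const_from_interior a b g c :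
  a < b -> cont_on a b g -> (forall x, a < x < b -> g x = c) ->
  forall x, a <= x <= b -> g x = c.
Proof.
  intros Hab Hc Hint x Hx.
  destruct (Req_dec (g x) c) as [E|E]; [exact E|exfalso].
  destruct (Hc x Hx (Rabs (g x - c))) as [delta [Hdelta Hnear]];
    [apply Rabs_pos_lt; lra|].
  (* Step from x a little towards the midpoint: this lands strictly inside (a,b). *)
  set (theta := Rmin 1 (delta / (b - a))).
  assert (Htheta : 0 < theta <= 1).
  { unfold theta; apply Rmin_case_strong; intros; split; try lra.
    apply Rdiv_lt_0_compat; lra. }
  assert (Hstep : theta * (b - a) <= delta).
  { assert (theta <= delta / (b - a)) by apply Rmin_r.
    apply (Rmult_le_compat_r (b - a)) in H; [|lra].
    unfold Rdiv in H; rewrite Rmult_assoc, Rinv_l, Rmult_1_r in H; lra. }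
  set (s := x + theta * ((a + b) / 2 - x)).
  assert (Hs : a < s < b) by (unfold s; split; nra).
  assert (Hsx : Rabs (s - x) < delta) by (apply Rabs_def1; unfold s; nra).
  specialize (Hnear s ltac:(lra) Hsx).
  rewrite (Hint s Hs), Rabs_minus_sym in Hnear. lra.
Qed.

Lemma cont_on_zero_derivative_const a b g :
  a < b -> cont_on a b g -> (forall t, a < t < b -> derivable_pt_lim g t 0) ->
  forall x y, a <= x <= b -> a <= y <= b -> g x = g y.
Proof.
  intros Hab Hc Hd.
  assert (Hmid : forall x, a <= x <= b -> g x = g ((a + b) / 2)).
  { apply cont_on_const_from_interior; auto. intros x Hx.
    destruct (Rle_dec x ((a + b) / 2)).
    - apply (zero_derivative_const_open a b); auto; lra.
    - symmetry; apply (zero_derivative_const_open a b); auto; lra. }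
  intros x y Hx Hy. rewrite (Hmid x Hx), (Hmid y Hy). reflexivity.
Qed.

Lemma is_solution_lin_comb d H u a b y z r s :
  is_solution d H u a b y -> is_solution d H u a b z ->
  is_solution d H u a b (fun t => lin_comb r (y t) s (z t)).
Proof.
  intros [Cy Dy] [Cz Dz]. split.
  - intros k Hk. destruct (Cy k Hk), (Cz k Hk). unfold lin_comb, Cre, Cim; simpl.
    split; apply cont_on_lin; auto.
  - intros t Ht k Hk. destruct (Dy t Ht k Hk), (Dz t Ht k Hk). rewrite mv_lin_comb.
    unfold lin_comb, Cre, Cim in *; simpl. split.
    + apply derivable_pt_lim_lin; auto.
    + replace (- (r * fst (mv d (H (u t)) (y t) k) + s * fst (mv d (H (u t)) (z t) k)))
        with (r * - fst (mv d (H (u t)) (y t) k) + s * - fst (mv d (H (u t)) (z t) k))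
        by ring.
      apply derivable_pt_lim_lin; auto.
Qed.

Lemma is_solution_subinterval d H u a b a' b' y :
  a <= a' -> b' <= b -> is_solution d H u a b y -> is_solution d H u a' b' y.
Proof.
  intros Ha Hb [Cy Dy]. split.
  - intros k Hk; destruct (Cy k Hk); split; eapply cont_on_subinterval; eauto.
  - intros t Ht; apply Dy; lra.
Qed.

Definition sqnorm (d : nat) (x : vec) : R :=
  Rsum d (fun k => Cre (x k) * Cre (x k) + Cim (x k) * Cim (x k)).

Lemma sqnorm_eq0 d x : sqnorm d x = 0 -> forall k, (k < d)%nat -> x k = C0.
Proof.
  intros Hx k Hk.
  assert (Hxk : Cre (x k) * Cre (x k) + Cim (x k) * Cim (x k) = 0).
  { refine (Rsum_nonneg_eq0 d (fun j => Cre (x j) * Cre (x j) + Cim (x j) * Cim (x j))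
              _ Hx k Hk).
    intros; nra. }
  apply C_ext; [exact (ltac:(nra) : Cre (x k) = 0) | exact (ltac:(nra) : Cim (x k) = 0)].
Qed.

Lemma cont_on_sqnorm_solution d H u a b y :
  is_solution d H u a b y -> cont_on a b (fun t => sqnorm d (y t)).
Proof.
  intros [Cy _]. apply cont_on_Rsum; intros k Hk. destruct (Cy k Hk).
  apply cont_on_plus; apply cont_on_mult; assumption.
Qed.

Lemma derivable_sqnorm_solution d H u a b y t :
  is_solution d H u a b y -> a < t < b ->
  derivable_pt_lim (fun s => sqnorm d (y s)) t (2 * Cim (braket d (y t) (H (u t)) (y t))).
Proof.
  intros [_ Dy] Ht.
  rewrite Im_braket_componentwise, <- Rsum_scal.
  rewrite (Rsum_ext d _ (fun k => 2 * (Cre (y t k) * Cim (mv d (H (u t)) (y t) k)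
             + Cim (y t k) * - Cre (mv d (H (u t)) (y t) k)))) by (intros; ring).
  apply (derivable_pt_lim_Rsum d (fun k s => Cre (y s k) * Cre (y s k) + Cim (y s k) * Cim (y s k))).
  intros k Hk. destruct (Dy t Ht k Hk). apply derivable_pt_lim_sum_sqr; assumption.
Qed.

Lemma sqnorm_solution_const d H u a b y :
  a < b -> (forall v, hermitian d (H v)) -> is_solution d H u a b y ->
  forall s t, a <= s <= b -> a <= t <= b -> sqnorm d (y s) = sqnorm d (y t).
Proof.
  intros Hab Hh Sy.
  apply cont_on_zero_derivative_const; [exact Hab | exact (cont_on_sqnorm_solution _ _ _ _ _ _ Sy)|].
  intros t Ht. replace 0 with (2 * Cim (braket d (y t) (H (u t)) (y t))).
  - exact (derivable_sqnorm_solution _ _ _ _ _ _ _ Sy Ht).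
  - rewrite Im_braket_self by apply Hh. ring.
Qed.

Lemma is_solution_unique d H u a b y z c :
  a < b -> (forall v, hermitian d (H v)) ->
  is_solution d H u a b y -> is_solution d H u a b z -> a <= c <= b ->
  (forall k, (k < d)%nat -> y c k = z c k) ->
  forall t, a <= t <= b -> forall k, (k < d)%nat -> y t k = z t k.
Proof.
  intros Hab Hh Sy Sz Hc Hyz t Ht k Hk.
  set (e := fun s => lin_comb 1 (y s) (-1) (z s)).
  assert (He_c : sqnorm d (e c) = 0).
  { unfold sqnorm. rewrite <- (Rsum_zero d). apply Rsum_ext; intros j Hj.
    unfold e, lin_comb. rewrite Hyz by exact Hj.
    destruct (z c j); unfold Cre, Cim, Cadd, Rscal; simpl; ring. }
  assert (He_t : e t k = C0).
  { apply (sqnorm_eq0 d); [|exact Hk].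
    rewrite <- He_c. apply (sqnorm_solution_const d H u a b); auto.
    apply is_solution_lin_comb; assumption. }
  unfold e, lin_comb in He_t. destruct (y t k), (z t k).
  unfold C0, Cadd, Rscal in He_t; simpl in He_t. injection He_t; intros.
  apply C_ext; unfold Cre, Cim; simpl; lra.
Qed.

Lemma hermitian_derivative d H dH :
  C1_with_derivative d H dH -> (forall v, hermitian d (H v)) ->
  forall v, hermitian d (dH v).
Proof.
  intros HC Hh v i j Hi Hj.
  destruct (proj1 (HC i j Hi Hj) v) as [Dre_ij Dim_ij].
  destruct (proj1 (HC j i Hj Hi) v) as [Dre_ji Dim_ji].
  assert (Ere : (fun w => Cre (H w i j)) = (fun w => Cre (H w j i))).
  { apply functional_extensionality; intro w. rewrite (Hh w i j Hi Hj). reflexivity. }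
  assert (Eim : (fun w => Cim (H w i j)) = (- (fun w => Cim (H w j i)))%F).
  { apply functional_extensionality; intro w. rewrite (Hh w i j Hi Hj). reflexivity. }
  rewrite Ere in Dre_ij. rewrite Eim in Dim_ij.
  pose proof (uniqueness_limite _ _ _ _ Dre_ij Dre_ji).
  pose proof (uniqueness_limite _ _ _ _ Dim_ij (derivable_pt_lim_opp _ _ _ Dim_ji)).
  apply C_ext; unfold Cre, Cim in *; simpl; lra.
Qed.

Lemma increasing_grid_le N (tt : nat -> R) :
  (forall n, (n < N)%nat -> tt n < tt (S n)) ->
  forall i j, (i <= j)%nat -> (j <= N)%nat -> tt i <= tt j.
Proof.
  intros Hinc i j Hij HjN. induction Hij; [lra|].
  assert (tt m < tt (S m)) by (apply Hinc; lia).
  assert (tt i <= tt m) by (apply IHHij; lia).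
  lra.
Qed.

Lemma solution_eq_interpolant d H u T psi chi a b c y :
  0 < T -> 0 <= a -> a < b -> b <= T -> a <= c <= b ->
  (forall v, hermitian d (H v)) ->
  is_solution d H u 0 T psi -> is_solution d H u 0 T chi ->
  is_solution d H u a b y ->
  (forall k, (k < d)%nat -> y c k = lin_comb ((T - c) / T) (psi c) (c / T) (chi c) k) ->
  forall t, a <= t <= b ->
  forall k, (k < d)%nat -> y t k = lin_comb ((T - c) / T) (psi t) (c / T) (chi t) k.
Proof.
  intros HT Ha Hab Hb Hc Hh Spsi Schi Sy Hyc.
  apply (is_solution_unique d H u a b y _ c); auto.
  apply (is_solution_subinterval d H u 0 T); try lra.
  apply is_solution_lin_comb; assumption.
Qed.

Theorem theorem2
  (d : nat) (T alpha : R) (H dH : R -> mat) (u : R -> R)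
  (psi_i psi_f : vec) (psi chi : R -> vec)
  (N : nat) (tt : nat -> R) (psin chin : nat -> R -> vec) :
  (1 <= d)%nat -> 0 < T -> 0 <= alpha ->
  C1_with_derivative d H dH ->
  (forall v, hermitian d (H v)) ->
  cont_on 0 T u ->
  is_solution d H u 0 T psi -> (forall k, (k < d)%nat -> psi 0 k = psi_i k) ->
  is_solution d H u 0 T chi -> (forall k, (k < d)%nat -> chi T k = psi_f k) ->
  tt 0%nat = 0 -> tt N = T -> (forall n, (n < N)%nat -> tt n < tt (S n)) ->
  (forall n, (n < N)%nat ->
     is_solution d H u (tt n) (tt (S n)) (psin n) /\
     (forall k, (k < d)%nat -> psin n (tt n) k = phi_state T tt psi chi n k) /\
     is_solution d H u (tt n) (tt (S n)) (chin n) /\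
     (forall k, (k < d)%nat -> chin n (tt (S n)) k = phi_state T tt psi chi (S n) k)) ->
  forall n, (n < N)%nat ->
  forall t, tt n <= t <= tt (S n) ->
    let alpha_n := (tt (S n) - tt n) / T * alpha in
    let beta_n := T / (tt (S n) - tt n) in
    gradJ d dH alpha u psi chi t =
      beta_n * gradJ d dH alpha_n u (psin n) (chin n) t.
Proof.
  intros _ HT _ HC Hh _ Spsi _ Schi _ Htt0 HttN Hinc Hsub n Hn t Ht alpha_n beta_n.
  assert (Hab : tt n < tt (S n)) by (apply Hinc; exact Hn).
  assert (Ha : 0 <= tt n).
  { rewrite <- Htt0. apply (increasing_grid_le N); auto; lia. }
  assert (Hb : tt (S n) <= T).
  { rewrite <- HttN. apply (increasing_grid_le N); auto; lia. }
  destruct (Hsub n Hn) as [Spsin [Hpsin_a [Schin Hchin_b]]].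
  pose proof (solution_eq_interpolant d H u T psi chi (tt n) (tt (S n)) (tt n) (psin n)
                HT Ha Hab Hb ltac:(lra) Hh Spsi Schi Spsin Hpsin_a t Ht) as Epsin.
  pose proof (solution_eq_interpolant d H u T psi chi (tt n) (tt (S n)) (tt (S n)) (chin n)
                HT Ha Hab Hb ltac:(lra) Hh Spsi Schi Schin Hchin_b t Ht) as Echin.
  unfold gradJ.
  rewrite (braket_ext d (chin n t) _ _ (psin n t) _ Echin Epsin).
  rewrite Im_braket_interpolation by (apply (hermitian_derivative d H dH HC Hh) || lra).
  unfold alpha_n, beta_n. field. lra.
Qed.
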